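(* Under the standing assumptions in the context, the coefficients $a_g$ satisfy $a_2=\tfrac{5}{24}$ and, for every $g\ge 3$, $$(3g-3)\,a_g=\frac12\left(\sum_{h=2}^{g-2}(3h-3)(3g-3h-3)\,a_h\,a_{g-h}+(3g-6)(3g-3)\,a_{g-1}\right).$$
   Context: Setting: the polynomial formulation of the BCOV holomorphic anomaly equations on a one-dimensional slice (local coordinate $z$) of the moduli space of a Calabi–Yau threefold. $C_{zzz}$ is the holomorphic Yukawa coupling, assumed nonzero. The genus-$g$ free energies $\mathcal F^{(g)}$ ($g\ge 1$) are polynomials in the generators $S^{zz},S^z,S,K_z$ with coefficients holomorphic (rational) in $z$. For $g\ge2$, $\mathcal F^{(g)}$ has degree $3g-3$ when $S^{zz},S^z,S,K_z$ are given weights $1,2,3,1$, and its term of highest degree in $S^{zz}$ is $a_g\,C_{zzz}^{2g-2}(S^{zz})^{3g-3}$ with $a_g\in\mathbb Q$. ''Lower order terms'' (l.o.t.) below means terms of lower degree in $S^{zz}$ relative to the displayed top term of the same weight. The covariant derivative $D_z$ acts as a derivation (Leibniz rule) and satisfies, at top order, $D_zS^{zz}=2S^z-C_{zzz}(S^{zz})^2+h^{zz}_z$ (with $h^{zz}_z$ holomorphic), so $D_zS^{zz}=-C_{zzz}(S^{zz})^2+\text{l.o.t.}$, and $D_zC_{zzz}=\partial_zC_{zzz}-3s^z_{zz}C_{zzz}-4K_zC_{zzz}+3C_{zzz}^2S^{zz}$ (with $s^z_{zz}$ holomorphic), so $D_zC_{zzz}=3C_{zzz}^2S^{zz}+\text{l.o.t.}$.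 The genus-one free energy satisfies $D_z\mathcal F^{(1)}=\tfrac12C_{zzz}S^{zz}+\text{l.o.t.}$. For $g\ge2$ the holomorphic anomaly equation in polynomial form reads $$\frac{\partial\mathcal F^{(g)}}{\partial S^{zz}}=\frac12\sum_{h=1}^{g-1}D_z\mathcal F^{(h)}\,D_z\mathcal F^{(g-h)}+\frac12 D_zD_z\mathcal F^{(g-1)},$$ together with $0=\partial_{K_z}\mathcal F^{(g)}+S^z\partial_S\mathcal F^{(g)}+S^{zz}\partial_{S^z}\mathcal F^{(g)}$. *)

From HB Require Import structures.
From mathcomp Require Import all_boot all_order all_algebra.
Set Implicit Arguments.
Unset Strict Implicit.
Unset Printing Implicit Defensive.
Import GRing.Theory.
Local Open Scope ring_scope.

(* Free energies are modelled as polynomials in the variable 'X = S^{zz}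
   with coefficients in a field F of characteristic 0 (a field containing
   C_{zzz}, S^z, S, K_z and the holomorphic coefficients). *)

Definition is_derivation (F : fieldType) (D : {poly F} -> {poly F}) : Prop :=
  (forall p q : {poly F}, D (p + q) = D p + D q) /\
  (forall p q : {poly F}, D (p * q) = D p * q + p * D q).

Definition top_term (F : fieldType) (p : {poly F}) (c : F) (n : nat) : Prop :=
  exists r : {poly F}, p = c *: 'X^n + r /\ (size r <= n)%N.

Definition dF (F : fieldType) (D : {poly F} -> {poly F}) (DF1 : {poly F})
  (Fg : nat -> {poly F}) (h : nat) : {poly F} :=
  if h == 1%N then DF1 else D (Fg h).

From Pilot Require Import Defs.
From HB Require Import structures.
From mathcomp Require Import all_boot all_order all_algebra.
From mathcomp Require Import ring zify.
Import GRing.Theory.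

Set Implicit Arguments.
Unset Strict Implicit.
Unset Printing Implicit Defensive.

Local Open Scope ring_scope.

(* Only leading terms in S^{zz} matter.  A derivation with the given top
   terms raises the S^{zz}-degree by one and acts on leading terms by
   D(c C^k (S^{zz})^n) = (3k - n) c C^{k+1} (S^{zz})^{n+1} + l.o.t., so the
   leading coefficients of D F^{(h)}, of their products and of D D F^{(g-1)}
   are rational multiples of C^{2g-2} in degree 3g - 4.  Comparing the
   coefficients of (S^{zz})^{3g-4} in the anomaly equation, cancelling
   C^{2g-2} and using that Q embeds in F (characteristic 0) gives a
   recursion over Q, which for g = 2 and g >= 3 is the statement. *)

Section RatrPchar0.
Variable F : fieldType.
Hypothesis F0 : [pchar F] =i pred0.

Lemma intr_eq0_pchar0 (z : int) : (z%:~R == 0 :> F) = (z == 0).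
Proof.
have natr_eq0 n : (n%:R == 0 :> F) = (n == 0)%N by move/pcharf0P: F0.
by case: z => n; rewrite ?NegzE ?mulrNz ?oppr_eq0 -pmulrn natr_eq0.
Qed.

Lemma ratr_frac (q : rat) (n d : int) :
  d != 0 -> q = n%:~R / d%:~R -> ratr q = n%:~R / d%:~R :> F.
Proof.
move=> d0 qE; have qdE : q * d%:~R = n%:~R by rewrite qE divfK ?intr_eq0.
have crossE : numq q * d = n * denq q.
  by apply: (@intr_inj rat); rewrite !intrM numqE -qdE mulrAC.
apply/eqP; rewrite /ratr eqr_div ?intr_eq0_pchar0 ?denq_neq0 //.
by rewrite -!intrM crossE.
Qed.

Let den_neq0 (x : rat) : (denq x)%:~R != 0 :> F.
Proof. by rewrite intr_eq0_pchar0 denq_neq0. Qed.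

Fact ratr_pchar0_is_zmod_morphism : zmod_morphism (@ratr F).
Proof.
move=> x y; rewrite (@ratr_frac _ (numq x * denq y - numq y * denq x)
  (denq x * denq y)) ?mulf_neq0 ?denq_neq0 //.
  by rewrite /ratr !(intrB, intrM); field; rewrite !den_neq0.
rewrite !(intrB, intrM) -{1}(divq_num_den x) -{1}(divq_num_den y).
by field; rewrite !intr_eq0 !denq_neq0.
Qed.

Fact ratr_pchar0_is_monoid_morphism : monoid_morphism (@ratr F).
Proof.
split=> [|x y]; first by rewrite /ratr divr1.
rewrite (@ratr_frac _ (numq x * numq y) (denq x * denq y)) ?mulf_neq0 ?denq_neq0 //.
  by rewrite /ratr !intrM; field; rewrite !den_neq0.
rewrite !intrM -{1}(divq_num_den x) -{1}(divq_num_den y).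
by field; rewrite !intr_eq0 !denq_neq0.
Qed.

(* The library only makes [ratr] a ring morphism into a numFieldType. *)
Definition ratr_pchar0 : {rmorphism rat -> F} := HB.pack (@ratr F)
  (GRing.isZmodMorphism.Build _ _ _ ratr_pchar0_is_zmod_morphism)
  (GRing.isMonoidMorphism.Build _ _ _ ratr_pchar0_is_monoid_morphism).

End RatrPchar0.

Section TopTerm.
Variable F : fieldType.
Implicit Types (p q : {poly F}) (c d : F).

Lemma top_termP p c n : top_term p c n <-> (size p <= n.+1)%N /\ p`_n = c.
Proof.
split=> [[r [-> hr]]|[hs hc]].
  split; last by rewrite coefD coefZ coefXn eqxx mulr1 (leq_sizeP _ _ hr) ?addr0.
  rewrite (leq_trans (size_polyD _ _)) // geq_max (leq_trans hr) // andbT.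
  by rewrite (leq_trans (size_scale_leq _ _)) ?size_polyXn.
exists (p - c *: 'X^n); split; first by rewrite addrC subrK.
apply/leq_sizeP => j hj; rewrite coefB coefZ coefXn.
have [ltnj|ltjn|<-] := ltngtP n j; last by rewrite mulr1 hc subrr.
  by rewrite (leq_sizeP _ _ hs) // mulr0 subr0.
by move: (leq_trans ltjn hj); rewrite ltnn.
Qed.

Lemma top_term_coef p c n : top_term p c n -> p`_n = c.
Proof. by case/top_termP. Qed.

Lemma top_term0 p n : (size p <= n)%N -> top_term p 0 n.
Proof. by exists p; rewrite scale0r add0r. Qed.

Lemma top_termC c : top_term c%:P c 0.
Proof. by apply/top_termP; rewrite size_polyC leq_b1 coefC. Qed.

Lemma top_termXn n : top_term ('X^n : {poly F}) 1 n.
Proof. by apply/top_termP; rewrite size_polyXn coefXn eqxx. Qed.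

Lemma top_termX : top_term ('X : {poly F}) 1 1.
Proof. exact: top_termXn 1. Qed.

Lemma top_termD p q c d n :
  top_term p c n -> top_term q d n -> top_term (p + q) (c + d) n.
Proof.
move=> /top_termP[hp cp] /top_termP[hq cq]; apply/top_termP.
by rewrite coefD cp cq (leq_trans (size_polyD _ _)) // geq_max hp.
Qed.

Lemma top_termM p q c d m n :
  top_term p c m -> top_term q d n -> top_term (p * q) (c * d) (m + n).
Proof.
move=> hpc /top_termP[hq cq]; have /top_termP[hp _] := hpc.
case: hpc => r [pE hr]; apply/top_termP; split.
  by apply: leq_trans (size_polyMleq _ _) _; lia.
rewrite pE mulrDl coefD -scalerAl coefZ coefXnM ltnNge leq_addr /= addKn cq.
have hrq : (size (r * q)%R <= m + n)%N by apply: leq_trans (size_polyMleq _ _) _; lia.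
by rewrite (leq_sizeP _ _ hrq) // addr0.
Qed.

End TopTerm.

Section Derivation.
Variables (F : fieldType) (D : {poly F} -> {poly F}) (C : F).
Hypothesis hD : is_derivation D.
Implicit Types (p q : {poly F}) (c : F).

Fact derivation_is_zmod_morphism : zmod_morphism D.
Proof. by case: hD => DD _ p q; apply/eqP; rewrite eq_sym subr_eq -DD subrK. Qed.

HB.instance Definition _ :=
  GRing.isZmodMorphism.Build _ _ D derivation_is_zmod_morphism.

Lemma derivationM p q : D (p * q) = D p * q + p * D q.
Proof. by case: hD. Qed.

Lemma derivation1 : D 1 = 0.
Proof.
have D11 := derivationM 1 1; rewrite !mulr1 mul1r in D11.
by apply: (addrI (D 1)); rewrite addr0 -D11.
Qed.

Lemma derivation_int (z : int) : D z%:~R = 0.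
Proof. by rewrite raddfMz /= derivation1 mul0rz. Qed.

Lemma derivation_ratr (F0 : [pchar F] =i pred0) (x : rat) : D (ratr x)%:P = 0.
Proof.
have den_neq0 : (denq x)%:~R != 0 :> {poly F}.
  by rewrite -(rmorph_int (@polyC F)) polyC_eq0 intr_eq0_pchar0 ?denq_neq0.
have /(congr1 D) : (denq x)%:~R * (ratr x)%:P = (numq x)%:~R :> {poly F}.
  rewrite -!(rmorph_int (@polyC F)) -polyCM /ratr mulrC.
  by rewrite divfK ?intr_eq0_pchar0 ?denq_neq0.
rewrite derivationM !derivation_int mul0r add0r => /eqP.
by rewrite mulf_eq0 (negbTE den_neq0) => /eqP.
Qed.

Hypothesis hDcoef : forall c : F, (size (D c%:P) <= 2)%N.
Hypothesis hDS : top_term (D 'X) (- C) 2.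
Hypothesis hDC : top_term (D C%:P) (3 * C ^+ 2) 1.

Lemma top_term_DXn n : top_term (D 'X^n) (- (n%:R * C)) n.+1.
Proof.
elim: n => [|n IHn].
  by rewrite expr0 derivation1 mul0r oppr0; apply: top_term0; rewrite size_poly0.
have := top_termM IHn (top_termX F); rewrite addn1 => DXnX.
have := top_termM (top_termXn F n) hDS; rewrite addn2 => XnDX.
have := top_termD DXnX XnDX.
by rewrite exprSr derivationM mulr1 mul1r -opprD -natr1 mulrDl mul1r.
Qed.

Lemma top_term_DZXn c n :
  top_term (D (c *: 'X^n)) ((D c%:P)`_1 - n%:R * C * c) n.+1.
Proof.
have DcE : top_term (D c%:P) (D c%:P)`_1 1 by apply/top_termP; rewrite hDcoef.
have := top_termM DcE (top_termXn F n); rewrite add1n => DcXn.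
have := top_termM (top_termC c) (top_term_DXn n); rewrite add0n => cDXn.
have := top_termD DcXn cDXn.
by rewrite -mul_polyC derivationM mulr1 mulrN [c * _]mulrC.
Qed.

Lemma size_D n p : (size p <= n)%N -> (size (D p) <= n.+1)%N.
Proof.
elim: n p => [|n IHn] p.
  by rewrite leqn0 size_poly_eq0 => /eqP->; rewrite raddf0 size_poly0.
move=> hp; have [r [-> hr]] : top_term p p`_n n by apply/top_termP.
have /top_termP[] := top_termD (top_term_DZXn p`_n n) (top_term0 (IHn r hr)).
by rewrite raddfD.
Qed.

Lemma top_term_D p c n :
  top_term p c n -> top_term (D p) ((D c%:P)`_1 - n%:R * C * c) n.+1.
Proof.
case=> r [-> hr]; rewrite raddfD -[X in top_term _ X]addr0.
exact: top_termD (top_term_DZXn c n) (top_term0 (size_D hr)).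
Qed.

Lemma coef_D_expC k : (D (C ^+ k)%:P)`_1 = (3 * k)%:R * C ^+ k.+1.
Proof.
elim: k => [|k IHk]; first by rewrite derivation1 coef0 mul0r.
rewrite exprS polyCM derivationM coefD coefMC coefCM IHk (top_term_coef hDC).
by rewrite mulnS natrD !exprS; ring.
Qed.

Lemma top_term_D_ratr (F0 : [pchar F] =i pred0) p (x : rat) k n :
  top_term p (ratr x * C ^+ k) n ->
  top_term (D p) (ratr x * ((3 * k)%:R - n%:R) * C ^+ k.+1) n.+1.
Proof.
suff -> : ratr x * ((3 * k)%:R - n%:R) * C ^+ k.+1 =
  (D (ratr x * C ^+ k)%:P)`_1 - n%:R * C * (ratr x * C ^+ k) by exact: top_term_D.
rewrite polyCM derivationM derivation_ratr // mul0r add0r coefCM coef_D_expC.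
by rewrite exprS; ring.
Qed.

End Derivation.

Definition dF_top_coef (a : nat -> rat) (h : nat) : rat :=
  if h == 1%N then 2^-1 else (3 * h - 3)%N%:R * a h.

Section AnomalyTopCoefficients.
Variables (F : fieldType) (D : {poly F} -> {poly F}) (C : F) (DF1 : {poly F}).
Variables (Fg : nat -> {poly F}) (a : nat -> rat).
Hypothesis F0 : [pchar F] =i pred0.
Hypothesis hD : is_derivation D.
Hypothesis hDcoef : forall c : F, (size (D c%:P) <= 2)%N.
Hypothesis hC : C != 0.
Hypothesis hDS : top_term (D 'X) (- C) 2.
Hypothesis hDC : top_term (D C%:P) (3 * C ^+ 2) 1.
Hypothesis hF1 : top_term DF1 (C / 2) 1.
Hypothesis hFg : forall g : nat, (2 <= g)%N ->
  top_term (Fg g) (ratr (a g) * C ^+ (2 * g - 2)) (3 * g - 3).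
Hypothesis hHAE : forall g : nat, (2 <= g)%N ->
  deriv (Fg g) =
    (2^-1 : F) *: (\sum_(1 <= h < g) dF D DF1 Fg h * dF D DF1 Fg (g - h))
    + (2^-1 : F) *: D (dF D DF1 Fg (g - 1)).

Local Notation dF := (dF D DF1 Fg).
Local Notation ratrF := (ratr_pchar0 F0).

Lemma top_term_dF h : (1 <= h)%N ->
  top_term (dF h) (ratr (dF_top_coef a h) * C ^+ (2 * h - 1)) (3 * h - 2).
Proof.
case: h => [|[|k]] // _.
  rewrite /dF_top_coef /Defs.dF /= -[ratr _]/(ratrF _) fmorphV rmorph_nat /=.
  by rewrite expr1 mulrC.
have := top_term_D_ratr hD hDcoef hDS hDC F0 (hFg (isT : (2 <= k.+2)%N)).
rewrite /dF_top_coef -[ratr (_ * _)]/(ratrF _) rmorphM rmorph_nat /=.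
have -> : (3 * (2 * k.+2 - 2) = (3 * k.+2 - 3) + (3 * k.+2 - 3))%N by lia.
rewrite natrD addrK [ratr _ * _]mulrC.
have -> : (2 * k.+2 - 2).+1 = (2 * k.+2 - 1)%N by lia.
by have -> : (3 * k.+2 - 3).+1 = (3 * k.+2 - 2)%N by lia.
Qed.

Lemma top_term_DdF g : (2 <= g)%N ->
  top_term (D (dF (g - 1)%N))
    (ratr (dF_top_coef a (g - 1)%N * (3 * g - 4)%N%:R) * C ^+ (2 * g - 2)) (3 * g - 4).
Proof.
case: g => [|[|k]] // _; rewrite subn1 /=.
have := top_term_D_ratr hD hDcoef hDS hDC F0 (top_term_dF (isT : (1 <= k.+1)%N)).
rewrite -[ratr (_ * _)]/(ratrF _) rmorphM rmorph_nat /=.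
have -> : (3 * (2 * k.+1 - 1) = (3 * k.+2 - 4) + (3 * k.+1 - 2))%N by lia.
rewrite natrD addrK.
have -> : (2 * k.+1 - 1).+1 = (2 * k.+2 - 2)%N by lia.
by have -> : (3 * k.+1 - 2).+1 = (3 * k.+2 - 4)%N by lia.
Qed.

Lemma top_term_dF_mul g h : (1 <= h < g)%N ->
  top_term (dF h * dF (g - h)%N)
    (ratr (dF_top_coef a h * dF_top_coef a (g - h)%N) * C ^+ (2 * g - 2)) (3 * g - 4).
Proof.
case/andP=> h_ge1 h_lt_g; have gh_ge1 : (1 <= g - h)%N by rewrite subn_gt0.
have := top_termM (top_term_dF h_ge1) (top_term_dF gh_ge1).
rewrite -[ratr (_ * _)]/(ratrF _) rmorphM /= mulrACA -exprD.
have -> : (2 * h - 1 + (2 * (g - h) - 1) = 2 * g - 2)%N by lia.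
by have -> : (3 * h - 2 + (3 * (g - h) - 2) = 3 * g - 4)%N by lia.
Qed.

Lemma dF_top_coef_recursion g : (2 <= g)%N ->
  (3 * g - 3)%N%:R * a g =
  2^-1 * (\sum_(1 <= h < g) dF_top_coef a h * dF_top_coef a (g - h)%N
          + dF_top_coef a (g - 1)%N * (3 * g - 4)%N%:R).
Proof.
move=> g_ge2; have := congr1 (fun p : {poly F} => p`_(3 * g - 4)) (hHAE g_ge2).
rewrite /= coef_deriv coefD !coefZ coef_sum (top_term_coef (top_term_DdF g_ge2)).
have -> : (3 * g - 4).+1 = (3 * g - 3)%N by lia.
rewrite (top_term_coef (hFg g_ge2)).
rewrite (eq_big_nat _ _ (fun h hg => top_term_coef (top_term_dF_mul hg))) => coefE.
apply: (fmorph_inj ratrF); apply: (mulIf (expf_neq0 (2 * g - 2) hC)).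
rewrite rmorphM rmorphM fmorphV !rmorph_nat rmorphD rmorph_sum /=.
by rewrite -mulrA mulr_natl coefE -mulr_suml; ring.
Qed.

End AnomalyTopCoefficients.

Section TopCoefficientRecursion.
Variable a : nat -> rat.
Hypothesis rec : forall g, (2 <= g)%N ->
  (3 * g - 3)%N%:R * a g =
  2^-1 * (\sum_(1 <= h < g) dF_top_coef a h * dF_top_coef a (g - h)%N
          + dF_top_coef a (g - 1)%N * (3 * g - 4)%N%:R).

Lemma top_coef_genus2 : a 2%N = 5%:R / 24%:R.
Proof.
have := rec (isT : (2 <= 2)%N); rewrite big_nat1 /dF_top_coef /= => a2E.
by apply: (mulfI (_ : (3 * 2 - 3)%N%:R != 0)) => //; rewrite a2E; field.
Qed.

Lemma top_coef_recursion g : (3 <= g)%N ->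
  (3 * g - 3)%N%:R * a g =
  2^-1 * (\sum_(2 <= h < g - 1)
            (3 * h - 3)%N%:R * (3 * g - 3 * h - 3)%N%:R * a h * a (g - h)%N
          + (3 * g - 6)%N%:R * (3 * g - 3)%N%:R * a (g - 1)%N).
Proof.
case: g => [|[|[|k]]] // _; rewrite rec // big_ltn // big_nat_recr //= subn1 /=.
rewrite (@eq_big_nat _ _ _ 2 k.+2 _ (fun h => (3 * h - 3)%N%:R
  * (3 * k.+3 - 3 * h - 3)%N%:R * a h * a (k.+3 - h)%N)); last first.
  move=> h /andP[h_ge2 h_lt]; rewrite /dF_top_coef.
  have -> : (h == 1)%N = false by apply/negbTE; rewrite neq_ltn h_ge2 orbT.
  have -> : (k.+3 - h == 1)%N = false by apply/negbTE; rewrite neq_ltn; lia.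
  have -> : (3 * (k.+3 - h) - 3 = 3 * k.+3 - 3 * h - 3)%N by lia.
  ring.
rewrite /dF_top_coef /=.
have -> : (k.+3 - k.+2 = 1)%N by lia.
have -> : (3 * k.+2 - 3 = 3 * k + 3)%N by lia.
have -> : (3 * k.+3 - 4 = 3 * k + 5)%N by lia.
have -> : (3 * k.+3 - 6 = 3 * k + 3)%N by lia.
have -> : (3 * k.+3 - 3 = 3 * k + 6)%N by lia.
by rewrite eqxx; field.
Qed.

End TopCoefficientRecursion.

Theorem mainTheorem1
  (F : fieldType) (hchar : [pchar F] =i pred0)
  (D : {poly F} -> {poly F}) (C : F) (DF1 : {poly F})
  (Fg : nat -> {poly F}) (a : nat -> rat)
  (hD : is_derivation D)
  (hDcoef : forall c : F, (size (D c%:P) <= 2)%N)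
  (hC : C != 0)
  (hDS : top_term (D 'X) (- C) 2)
  (hDC : top_term (D C%:P) (3 * C ^+ 2) 1)
  (hF1 : top_term DF1 (C / 2) 1)
  (hFg : forall g : nat, (2 <= g)%N ->
     top_term (Fg g) (ratr (a g) * C ^+ (2 * g - 2)) (3 * g - 3))
  (hHAE : forall g : nat, (2 <= g)%N ->
     deriv (Fg g) =
       (2^-1 : F) *: (\sum_(1 <= h < g) dF D DF1 Fg h * dF D DF1 Fg (g - h))
       + (2^-1 : F) *: D (dF D DF1 Fg (g - 1))) :
  a 2%N = 5%:R / 24%:R /\
  (forall g : nat, (3 <= g)%N ->
     (3 * g - 3)%N%:R * a g =
       2^-1 * (\sum_(2 <= h < g - 1)
                  (3 * h - 3)%N%:R * (3 * g - 3 * h - 3)%N%:R * a h * a (g - h)%N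
               + (3 * g - 6)%N%:R * (3 * g - 3)%N%:R * a (g - 1)%N)).
Proof.
have rec := dF_top_coef_recursion hchar hD hDcoef hC hDS hDC hF1 hFg hHAE.
split; [exact: top_coef_genus2 rec | exact: top_coef_recursion rec].
Qed.
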